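(* Let $X$ be a compact Hausdorff space with its unique compatible uniform structure $\mathfrak{U}$, and let $\sim$ be a topologically quasiconvex equivalence relation on $X$. For $A\subseteq X/\!\sim$ put $\sim_A\ =\Delta X\cup\bigcup_{[x]\in A}[x]\times[x]$. Then for every $A\subseteq X/\!\sim$, the quotient space $X/\!\sim_A$ is Hausdorff.
   Context: A subset $S$ is $u$-small (for an entourage $u$) if $S\times S\subseteq u$. An equivalence relation $\sim$ on a compact Hausdorff space $X$ is topologically quasiconvex if every equivalence class $[q]$ is closed and, for every $u\in\mathfrak{U}$, only finitely many equivalence classes are not $u$-small. *)

From HB Require Import structures.
From mathcomp Require Import all_boot all_order all_algebra generic_quotient.
From mathcomp Require Import all_classical all_reals all_analysis.
Set Implicit Arguments. Unset Strict Implicit. Unset Printing Implicit Defensive.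
Local Open Scope classical_set_scope.

Definition small (X : Type) (u : set (X * X)) (S : set X) : Prop :=
  S `*` S `<=` u.

Definition eqclass (X : Type) (R : X -> X -> Prop) (q : X) : set X :=
  [set y | R q y].

Definition classes (X : Type) (R : X -> X -> Prop) : set (set X) :=
  [set eqclass R q | q in setT].

Definition is_equivalence (X : Type) (R : X -> X -> Prop) : Prop :=
  (forall x, R x x) /\ (forall x y, R x y -> R y x) /\
  (forall x y z, R x y -> R y z -> R x z).

Definition top_quasiconvex (X : uniformType) (R : X -> X -> Prop) : Prop :=
  is_equivalence R /\
  (forall q : X, closed (eqclass R q)) /\
  (forall u, entourage u -> finite_set [set C | classes R C /\ ~ small u C]).

Definition simA (X : Type) (A : set (set X)) (x y : X) : Prop :=
  x = y \/ exists2 C, A C & C x /\ C y.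

Section SimARel.
Variables (X : Type) (R : X -> X -> Prop) (A : set (set X)).
Hypothesis HR : is_equivalence R.
Hypothesis HA : A `<=` classes R.

Definition simAb (x y : X) : bool := `[< simA A x y >].

Lemma simAb_refl : reflexive simAb.
Proof. by move=> x; apply/asboolP; left. Qed.

Lemma simAb_sym : symmetric simAb.
Proof.
move=> x y; apply/asboolP/asboolP => -[->|[C AC [? ?]]]; (try by left);
  by right; exists C.
Qed.

Lemma simAb_trans : transitive simAb.
Proof.
move=> y x z /asboolP [<-|[C AC [Cx Cy]]] /asboolP // [<-|[D AD [Dy Dz]]].
- by apply/asboolP; right; exists C.
- apply/asboolP; right; exists C => //; split => //.
  move: (HA AC) (HA AD) => [p _ Cp] [q _ Dq].
  case: HR => _ [Hs Ht]; move: Cx Cy Dy Dz; rewrite -Cp -Dq /eqclass /=.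
  move=> px py qy qz; apply: (Ht _ q) => //.
  by apply: (Ht _ y) => //; apply: Hs.
Qed.

Definition simA_rel : equiv_rel X := EquivRel simAb simAb_refl simAb_sym simAb_trans.
End SimARel.

From HB Require Import structures.
From mathcomp Require Import all_boot all_order all_algebra generic_quotient.
From mathcomp Require Import all_classical all_reals all_analysis.
From mathcomp Require Import Rstruct.
Local Open Scope classical_set_scope.
Local Open Scope quotient_scope.

(** The classes of [~_A] are the classes of [~] lying in [A] together with
    the singletons outside their union; all of them are closed.  By
    quasiconvexity, near a point [z] only finitely many classes of [A] are
    not small, so the decomposition is upper semicontinuous: if the class of
    [z] lies in an open set [O], so do the classes of all points near [z].
    The quotient of a compact Hausdorff (hence normal) space by an upper
    semicontinuous decomposition into closed sets is Hausdorff: separate two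
    classes by disjoint open sets and take the saturated open sets inside. *)

Section UpperSemicontinuousQuotient.
Variables (T : topologicalType) (e : equiv_rel T).

Let Q := quotient_topology {eq_quot e}.

Lemma class_repr_pi (x : T) :
  [set y | e (repr (\pi_Q x)) y] = [set y | e x y].
Proof.
have e_repr_x : e (repr (\pi_Q x)) x by apply/(eqquotP {eq_quot e}); rewrite reprK.
by apply/funext => y; rewrite /= (equiv_ltrans e_repr_x).
Qed.

Lemma pi_preimage_saturation_interior (O : set T) :
  \pi_Q @^-1` [set q : Q | [set y | e (repr q) y] `<=` O] =
  [set x | [set y | e x y] `<=` O].
Proof. by apply/seteqP; split=> x /=; rewrite class_repr_pi. Qed.

Hypothesis usc_e : forall O : set T, open O -> open [set x | [set y | e x y] `<=` O].

Lemma open_quotient_saturation_interior (O : set T) : open O ->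
  open [set q : Q | [set y | e (repr q) y] `<=` O].
Proof.
move=> oO; rewrite /open /= /quotient_open pi_preimage_saturation_interior.
exact: usc_e.
Qed.

Hypotheses (hT : hausdorff_space T) (cT : compact [set: T]).
Hypothesis closed_class : forall x : T, closed [set y | e x y].

Lemma hausdorff_quotient_usc : hausdorff_space Q.
Proof.
rewrite open_hausdorff => a b ab.
have disj : [set y | e (repr a) y] `&` [set y | e (repr b) y] = set0.
  apply/disjoints_subset => z /= /(eqquotP Q) az /(eqquotP Q) bz.
  by move: ab; rewrite -(reprK a) -(reprK b) az bz eqxx.
(* [normal_openP] is stated over an arbitrary [realType], any one will do. *)
have [U [V [oU oV aU bV UV]]] := (@normal_openP Rdefinitions.R T).1
  (compact_normal hT cT) _ _ (closed_class _) (closed_class _) disj.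
exists ([set q : Q | [set y | e (repr q) y] `<=` U],
        [set q : Q | [set y | e (repr q) y] `<=` V]) => /=.
  by rewrite !inE.
split; [exact: open_quotient_saturation_interior..|].
apply/eqP/disjoints_subset => q qU qV.
have : (U `&` V) (repr q) by split; [apply: qU | apply: qV] => /=.
by rewrite UV.
Qed.

End UpperSemicontinuousQuotient.

Lemma classes_meet_eq {X : Type} {R : X -> X -> Prop} {C D : set X} {z : X} :
  is_equivalence R -> classes R C -> classes R D -> C z -> D z -> C = D.
Proof.
move=> [_ [symR transR]] [p _ <-] [q _ <-]; rewrite /eqclass /= => pz qz.
have pq : R p q by apply: transR pz (symR _ _ qz).
apply/seteqP; split=> y /=; first exact: transR (symR _ _ pq).
exact: transR pq.
Qed.

Section SimAClasses.
Context {X : Type} {R : X -> X -> Prop} {A : set (set X)}.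
Hypotheses (hR : is_equivalence R) (hA : A `<=` classes R).

Lemma simA_eqclass_in {C : set X} {x : X} : A C -> C x -> eqclass (simA A) x = C.
Proof.
move=> AC Cx; apply/seteqP; split=> z /=; last by move=> Cz; right; exists C.
case=> [<- //|[D AD [Dx Dz]]].
by rewrite (classes_meet_eq hR (hA _ AC) (hA _ AD) Cx Dx).
Qed.

Lemma simA_eqclass_out {x : X} :
  ~ (exists2 C, A C & C x) -> eqclass (simA A) x = [set x].
Proof.
move=> xA; apply/seteqP; split=> z /=; last by move=> ->; left.
by case=> [<- //|[C AC [Cx _]]]; case: xA; exists C.
Qed.

Lemma simA_relE (x : X) : [set y | simA_rel hR hA x y] = eqclass (simA A) x.
Proof. by apply/seteqP; split=> y /= /asboolP. Qed.

End SimAClasses.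

Lemma closed_simA_eqclass (X : topologicalType) (R : X -> X -> Prop)
    (A : set (set X)) (x : X) :
  accessible_space X -> is_equivalence R -> (forall q, closed (eqclass R q)) ->
  A `<=` classes R -> closed (eqclass (simA A) x).
Proof.
move=> T1X hR closedR hA.
have [[C AC Cx]|xA] := pselect (exists2 C, A C & C x).
  by rewrite (simA_eqclass_in hR hA AC Cx); case: (hA _ AC) => q _ <-.
by rewrite (simA_eqclass_out xA); exact: accessible_closed_set1.
Qed.

Lemma open_simA_saturation_interior (X : uniformType) (R : X -> X -> Prop)
    (A : set (set X)) (O : set X) :
  top_quasiconvex R -> A `<=` classes R -> open O ->
  open [set z | eqclass (simA A) z `<=` O].
Proof.
move=> [_ [closedR finR]] hA oO; rewrite openE => z zO.
have /nbhsP[u entu uzO] : nbhs z O.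
  by apply: open_nbhs_nbhs; split=> //; apply: zO; left.
pose w := split_ent u.
pose Bad := [set C | (classes R C /\ ~ small w C) /\ A C /\ ~ C `<=` O].
have closed_Bad : closed (\bigcup_(C in Bad) C).
  apply: closed_bigcup => [|C [[[q _ <-] _] _]]; last exact: closedR.
  by apply: sub_finite_set (finR w (entourage_split_ent entu)) => C [].
have notBad_z : ~ (\bigcup_(C in Bad) C) z.
  by case=> C [_ [AC CO]] Cz; apply: CO => d Cd; apply: zO; right; exists C.
have nbhs_notBad : nbhs z (~` \bigcup_(C in Bad) C).
  by apply: open_nbhs_nbhs; split=> //; exact: closed_openC.
apply: filterS (filterI (nbhs_entourage z (entourage_split_ent entu)) nbhs_notBad).
move=> z' [+ z'Bad]; rewrite /xsection /= inE => wzz' d [<-|[C AC [Cz' Cd]]].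
  by apply: uzO; rewrite /xsection /= inE; exact: split_ent_subset.
have [smallC|nsmallC] := pselect (small w C).
  apply: uzO; rewrite /xsection /= inE; apply: subset_split_ent => //.
  by exists z'; [|exact: (smallC (z', d))].
have [CO|nCO] := pselect (C `<=` O); first exact: CO.
by exfalso; apply: z'Bad; exists C => //; do !split => //; exact: hA.
Qed.

Theorem mainTheorem8 (X : uniformType) (hcpt : compact [set: X])
  (hT2 : hausdorff_space X) (R : X -> X -> Prop) (hR : top_quasiconvex R)
  (A : set (set X)) (hA : A `<=` classes R) :
  hausdorff_space
    (quotient_topology {eq_quot simA_rel (proj1 hR) hA}).
Proof.
apply: hausdorff_quotient_usc => //; [move=> O oO | move=> x].
- under eq_fun do rewrite simA_relE.
  exact: open_simA_saturation_interior hR hA oO.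
- rewrite simA_relE.
  exact: closed_simA_eqclass (hausdorff_accessible hT2) hR.1 hR.2.1 hA.
Qed.
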